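(* Let $n\ge1$ and $j\ge2$ be integers with $j\not\equiv1\pmod 3$, and let $\lambda\in\Sigma$ satisfy \[ \max\{\lambda_1-\lambda_2,\ \lambda_2-\lambda_3,\ \lambda_3-\lambda_1+1\}\le n-i-1\ \text{ if } j=3i+2, \] \[ \max\{\lambda_2-\lambda_1,\ \lambda_3-\lambda_2,\ \lambda_1-\lambda_3-1\}\le n-i-1\ \text{ if } j=3i. \] Then the number of $(K'F'^\times,K_n)$-double cosets contained in $K'F'^\times\lambda(\varpi)K$ is at most $q^{3n-2i}(1+1/q)^3$ when $j=3i$, and at most $q^{3n-2i-2}(1+1/q)^3$ when $j=3i+2$.
   Context: $F$ is a $p$-adic field with $p\ne2,3$, ring of integers $R$, uniformizer $\varpi$, residue field of order $q$. $\Sigma=\{\lambda\in\mathbb Z^3:\lambda_1+\lambda_2+\lambda_3=0\}$ and $\lambda(\varpi)=\operatorname{diag}(\varpi^{\lambda_1},\varpi^{\lambda_2},\varpi^{\lambda_3})$. $F'=F(\varpi')$ with $\varpi'^3=\varpi$, embedded in $M_3(F)$ via its regular representation on the $R$-basis $\{1,\varpi',\varpi'^2\}$ of its ring of integers, so that $\varpi'$ is the matrix with entries $1$ in positions $(2,1),(3,2)$, $\varpi$ in position $(1,3)$, and $0$ elsewhere. $K=GL_3(R)$, $K_n$ is the subgroup of $K$ of elements congruent to the identity mod $\varpi^n$, and $K'$ is the lower triangular Iwahori subgroup (elements of $K$ whose reduction mod $\varpi$ is lower triangular). *)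

From HB Require Import structures.
From mathcomp Require Import all_boot all_order all_algebra.
Set Implicit Arguments. Unset Strict Implicit. Unset Printing Implicit Defensive.
Import Order.TTheory GRing.Theory Num.Theory.
Local Open Scope ring_scope.

Section PAdic.
Variables (F : fieldType) (v : F -> int) (w : F).

Definition congr_pow (k : int) (x y : F) : Prop :=
  x - y = 0 \/ k <= v (x - y).

Definition in_R (x : F) : Prop := x = 0 \/ 0 <= v x.

(** v is a normalized discrete valuation on F^x (v 0 is irrelevant) *)
Definition discrete_valuation : Prop :=
  (forall x y, x != 0 -> y != 0 -> v (x * y) = v x + v y) /\
  (forall x y, x != 0 -> y != 0 -> x + y != 0 -> Num.min (v x) (v y) <= v (x + y)).

(** the residue field R / wR has exactly q elements *)
Definition residue_card (q : nat) : Prop :=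
  exists s : seq F,
    [/\ size s = q, (forall x, x \in s -> in_R x),
        (forall a b, (a < size s)%N -> (b < size s)%N -> a <> b ->
            ~ congr_pow 1 (nth 0 s a) (nth 0 s b)) &
        (forall x, in_R x -> exists y, y \in s /\ congr_pow 1 x y)].

(** F is a p-adic field (char 0, complete w.r.t. a discrete valuation,
    finite residue field of order q and characteristic p), with
    uniformizer w and ring of integers R = in_R. *)
Definition padic_field (p q : nat) : Prop :=
  [/\ discrete_valuation /\ (w != 0 /\ v w = 1),
      (forall m : nat, (0 < m)%N -> (m%:R : F) != 0),
      residue_card q,
      (prime p /\ congr_pow 1 (p%:R) 0) &
      (forall u : nat -> F,
         (forall k : int, exists N, forall m l, (N <= m)%N -> (N <= l)%N ->
             congr_pow k (u m) (u l)) ->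
         exists L, forall k : int, exists N, forall m, (N <= m)%N ->
             congr_pow k (u m) L)].

Definition mat_R (A : 'M[F]_3) : Prop := forall i j, in_R (A i j).

(** K = GL_3(R) *)
Definition inK (A : 'M[F]_3) : Prop :=
  mat_R A /\ \det A != 0 /\ v (\det A) = 0.

Definition inKn (n : nat) (A : 'M[F]_3) : Prop :=
  inK A /\ forall i j, congr_pow n%:Z (A i j) ((1%:M : 'M[F]_3) i j).

(** K' = lower triangular Iwahori: reduction mod w lower triangular *)
Definition inK' (A : 'M[F]_3) : Prop :=
  inK A /\ forall i j : 'I_3, (i < j)%N -> congr_pow 1 (A i j) 0.

(** the matrix of w' = w^(1/3) in the regular representation on {1,w',w'^2} *)
Definition wmat : 'M[F]_3 :=
  \matrix_(i < 3, j < 3)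
    if (i == 1%N :> nat) && (j == 0%N :> nat) then 1
    else if (i == 2%N :> nat) && (j == 1%N :> nat) then 1
    else if (i == 0%N :> nat) && (j == 2%N :> nat) then w
    else 0.

(** F'^x embedded in GL_3(F) *)
Definition inF'x (A : 'M[F]_3) : Prop :=
  exists a b c : F, (a, b, c) != (0, 0, 0) /\
    A = a%:M + b *: wmat + c *: (wmat *m wmat).

Definition inK'F'x (A : 'M[F]_3) : Prop :=
  exists k f, inK' k /\ inF'x f /\ A = k *m f.

Definition lam_mat (l1 l2 l3 : int) : 'M[F]_3 :=
  \matrix_(i < 3, j < 3)
    if i == j then w ^ (nth 0 [:: l1; l2; l3] i) else 0.

Definition in_big_cell (l1 l2 l3 : int) (g : 'M[F]_3) : Prop :=
  exists h k, inK'F'x h /\ inK k /\ g = h *m lam_mat l1 l2 l3 *m k.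

Definition same_dcoset (n : nat) (g g' : 'M[F]_3) : Prop :=
  exists h y, inK'F'x h /\ inKn n y /\ g' = h *m g *m y.

(** the number of (K'F'^x, K_n)-double cosets contained in
    K'F'^x lambda(w) K is at most N: any family of elements of
    K'F'^x lambda(w) K lying in pairwise distinct double cosets has
    at most N members. *)
Definition dcoset_count_le (n : nat) (l1 l2 l3 : int) (N : rat) : Prop :=
  forall s : seq 'M[F]_3,
    (forall g, g \in s -> in_big_cell l1 l2 l3 g) ->
    (forall a b, (a < size s)%N -> (b < size s)%N -> a <> b ->
        ~ same_dcoset n (nth 0 s a) (nth 0 s b)) ->
    (size s)%:R <= N.

End PAdic.

From HB Require Import structures.
From mathcomp Require Import all_boot all_order all_algebra zify ring lra.
Set Implicit Arguments. Unset Strict Implicit. Unset Printing Implicit Defensive.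
Import Order.TTheory GRing.Theory Num.Theory.
Local Open Scope ring_scope.

(* Write g = h lam k with h in K'F'^x and k in K. Every x in K with
   v(x_ij) >= gap i j := l_j - l_i + [i < j] satisfies lam x lam^-1 in K', so the
   (K'F'^x, K_n)-double coset of g only depends on the class of k in H \ K / K_n
   for the group H of such x. Order the rows p0, p1, p2 so that the three gaps
   between them are positive. Then H may rescale rows by units, add multiples of a
   row to the rows after it, and add w^gap-multiples of a row to the rows before it,
   while K_n absorbs anything divisible by w^n. This row reduction brings k to a
   normal form which, after reordering rows and columns, is upper unitriangular;
   its three entries above the diagonal only matter modulo w^min(gap, n), and lie
   in wR when the column order inverts the corresponding pair. With a, b, c these
   three minima, counting normal forms over the six column orders gives at most
   q^(a+b+c-3) (q^3 + 2q^2 + 2q + 1) <= q^(a+b+c) (1 + 1/q)^3 classes, and the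
   hypotheses on lam bound a + b + c by 3n - 2i, resp. 3n - 2i - 2. *)

Lemma count_classes_le (T : Type) (U : eqType) (x0 : T) (S : seq T) (C : seq U)
    (P : T -> U -> Prop) (R : T -> T -> Prop) :
  (forall a, (a < size S)%N -> exists2 t, t \in C & P (nth x0 S a) t) ->
  (forall x y t, P x t -> P y t -> R x y) ->
  (forall a b, (a < size S)%N -> (b < size S)%N -> a <> b -> ~ R (nth x0 S a) (nth x0 S b)) ->
  (size S <= size C)%N.
Proof.
move=> cover PR distinct; case: (posnP (size S)) => [-> //|S_gt0].
have [u0 _ _] := cover 0%N S_gt0.
have [ts [sz hts]] : exists ts : seq U, size ts = size S /\ forall a, (a < size S)%N ->
    nth u0 ts a \in C /\ P (nth x0 S a) (nth u0 ts a).
  elim: S cover {distinct S_gt0} => [|x S IH] cover; first by exists [::].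
  have [t tC Pt] := cover 0%N isT.
  have [ts [sz hts]] := IH (fun a => cover a.+1).
  by exists (t :: ts); split => [/=|[|a] ha /=]; [rewrite sz | | exact: hts].
rewrite -sz; apply: uniq_leq_size.
- apply/(uniqP u0) => a b; rewrite !inE sz => ha hb e.
  apply/eqP/negPn/negP => /eqP ab; apply: (distinct a b ha hb ab).
  by apply: (PR _ _ (nth u0 ts a)); [exact: (hts a ha).2 | rewrite e; exact: (hts b hb).2].
- by move=> t /(nthP u0) [a ha <-]; rewrite sz in ha; exact: (hts a ha).1.
Qed.

Definition distinct3 (a b c : 'I_3) := [&& a != b, a != c & b != c].

Lemma distinct3_complete (a b : 'I_3) : a != b -> exists c, distinct3 a b c.
Proof.
by case: a b => [[|[|[|a]]] Ha] [[|[|[|b]]] Hb] //= _;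
  [exists 2 | exists 1 | exists 2 | exists 0 | exists 1 | exists 0].
Qed.

Lemma distinct3_cover a b c : distinct3 a b c -> forall x : 'I_3, [|| x == a, x == b | x == c].
Proof.
by case: a b c => [[|[|[|a]]] Ha] [[|[|[|b]]] Hb] [[|[|[|c]]] Hc] //= _ [[|[|[|x]]] Hx].
Qed.

Section Gaps.
Variables (l1 l2 l3 : int) (n : nat).

Definition lam_exp (i : 'I_3) : int := nth 0 [:: l1; l2; l3] i.

(* The least valuation of the (i, j) entry of the matrices in lam^-1 K' lam. *)
Definition gap (i j : 'I_3) : int := lam_exp j - lam_exp i + (i < j)%N.

Lemma gapii i : gap i i = 0.
Proof. by rewrite /gap ltnn subrr. Qed.

Lemma gap_sym i j : i != j -> gap i j + gap j i = 1.
Proof.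
move=> ij; rewrite /gap; have : ((i < j)%N + (j < i)%N = 1)%N.
  by case: (ltngtP i j) => // h; move: ij; rewrite (val_inj h) eqxx.
lia.
Qed.

Lemma gap_triangle i j k : gap i j <= gap i k + gap k j.
Proof.
rewrite /gap; have : ((i < j)%N <= (i < k)%N + (k < j)%N)%N.
  by case: (ltnP i k); case: (ltnP k j); case: (ltnP i j) => //=; lia.
lia.
Qed.

Definition gap_order (p0 p1 p2 : 'I_3) := [&& 1 <= gap p0 p1, 1 <= gap p0 p2 & 1 <= gap p1 p2].

Lemma gap_order_distinct p0 p1 p2 : gap_order p0 p1 p2 -> distinct3 p0 p1 p2.
Proof.
case/and3P=> g01 g02 g12; apply/and3P; split; apply/eqP => e;
  [move: g01 | move: g02 | move: g12]; by rewrite e gapii.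
Qed.

Definition capn (e : int) : nat := `|Num.min e n%:Z|%N.

Lemma capnE e : 1 <= e -> (capn e)%:Z = Num.min e n%:Z.
Proof. by rewrite /capn; lia. Qed.

Lemma capn_gt0 e : (0 < n)%N -> 1 <= e -> (0 < capn e)%N.
Proof. by rewrite /capn; lia. Qed.

Lemma exists_gap_order : exists p0 p1 p2, gap_order p0 p1 p2.
Proof.
pose o0 := @Ordinal 3 0 isT; pose o1 := @Ordinal 3 1 isT; pose o2 := @Ordinal 3 2 isT.
have [h12|h12] := lerP l1 l2; have [h23|h23] := lerP l2 l3; have [h13|h13] := lerP l1 l3;
  [ exists o0, o1, o2 | lia | exists o0, o2, o1 | exists o2, o0, o1
  | exists o1, o0, o2 | exists o1, o2, o0 | lia | exists o2, o1, o0 ].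
all: by rewrite /gap_order /gap /lam_exp /=; apply/and3P; split; lia.
Qed.

Lemma capn_gap_sum_le p0 p1 p2 (j : nat) : gap_order p0 p1 p2 ->
  l1 + l2 + l3 = 0 -> (j %% 3 != 1)%N ->
  ((j %% 3 = 2)%N ->
     Num.max (l1 - l2) (Num.max (l2 - l3) (l3 - l1 + 1)) <= n%:Z - (j %/ 3)%:Z - 1) ->
  ((j %% 3 = 0)%N ->
     Num.max (l2 - l1) (Num.max (l3 - l2) (l1 - l3 - 1)) <= n%:Z - (j %/ 3)%:Z - 1) ->
  (capn (gap p0 p1) + capn (gap p0 p2) + capn (gap p1 p2))%:Z <=
    (if (j %% 3 == 0)%N then 3 * n%:Z - 2 * (j %/ 3)%:Z else 3 * n%:Z - 2 * (j %/ 3)%:Z - 2).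
Proof.
move=> hp hsum hj h2 h0; have := gap_order_distinct hp; move: hp h2 h0.
have : (j %% 3 = 0)%N \/ (j %% 3 = 2)%N by move: hj; have := ltn_pmod j (isT : (0 < 3)%N); lia.
rewrite /gap_order /capn /gap /lam_exp.
case: p0 p1 p2 => [[|[|[|?]]] ?] // [[|[|[|?]]] ?] // [[|[|[|?]]] ?] //=.
all: by case => -> /=; lia.
Qed.

End Gaps.

Section Valuation.
Variables (F : fieldType) (v : F -> int) (w : F).
Hypothesis vM : forall x y : F, x != 0 -> y != 0 -> v (x * y) = v x + v y.
Hypothesis vD : forall x y : F, x != 0 -> y != 0 -> x + y != 0 ->
  Num.min (v x) (v y) <= v (x + y).
Hypothesis w_neq0 : w != 0.
Hypothesis vw : v w = 1.

Definition vge (k : int) (x : F) : bool := (x == 0) || (k <= v x).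
Definition unitR (x : F) : bool := (x != 0) && (v x == 0).

Lemma v1 : v 1 = 0.
Proof.
have : v (1 * 1 : F) = v 1 + v 1 := vM (oner_neq0 F) (oner_neq0 F).
by rewrite mulr1; lia.
Qed.

Lemma vN x : v (- x) = v x.
Proof.
have [->|x0] := eqVneq x 0; first by rewrite oppr0.
have N10 : (-1 : F) != 0 by rewrite oppr_eq0 oner_neq0.
have vN1 : v (-1) = 0 by have := vM N10 N10; rewrite mulrNN mulr1 v1; lia.
by rewrite -mulN1r vM // vN1 add0r.
Qed.

Lemma vV x : x != 0 -> v x^-1 = - v x.
Proof.
move=> x0; have := vM x0 (invr_neq0 x0).
by rewrite mulfV // v1; lia.
Qed.

Lemma vge0 k : vge k 0.
Proof. by rewrite /vge eqxx. Qed.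

Lemma vge1 : vge 0 1.
Proof. by rewrite /vge v1 lexx orbT. Qed.

Lemma vge_w : vge 1 w.
Proof. by rewrite /vge vw lexx orbT. Qed.

Lemma vge_le a b x : a <= b -> vge b x -> vge a x.
Proof. rewrite /vge => ab /orP [->//|h]; apply/orP; right; lia. Qed.

Lemma vgeN k x : vge k (- x) = vge k x.
Proof. by rewrite /vge oppr_eq0 vN. Qed.

Lemma vgeN1 : vge 0 (-1).
Proof. by rewrite vgeN vge1. Qed.

Lemma vgeD k x y : vge k x -> vge k y -> vge k (x + y).
Proof.
have [->|x0] := eqVneq x 0; first by rewrite add0r.
have [->|y0] := eqVneq y 0; first by rewrite addr0.
have [->|s0] := eqVneq (x + y) 0; first by rewrite vge0.
rewrite /vge (negbTE x0) (negbTE y0) (negbTE s0) /=.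
by have := vD x0 y0 s0; lia.
Qed.

Lemma vgeB k x y : vge k x -> vge k y -> vge k (x - y).
Proof. by move=> hx hy; rewrite vgeD ?vgeN. Qed.

Lemma vgeM a b x y : vge a x -> vge b y -> vge (a + b) (x * y).
Proof.
have [->|x0] := eqVneq x 0; first by rewrite mul0r => *; apply: vge0.
have [->|y0] := eqVneq y 0; first by rewrite mulr0 => *; apply: vge0.
by rewrite /vge mulf_eq0 (negbTE x0) (negbTE y0) /= vM //; lia.
Qed.

Lemma vgeMl k x y : vge 0 x -> vge k y -> vge k (x * y).
Proof. by move=> hx hy; have := vgeM hx hy; rewrite add0r. Qed.

Lemma vgeMr k x y : vge k x -> vge 0 y -> vge k (x * y).
Proof. by move=> hx hy; have := vgeM hx hy; rewrite addr0. Qed.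

Lemma vgeX x m : vge 0 x -> vge 0 (x ^+ m).
Proof. by move=> h; elim: m => [|m IH]; rewrite ?expr0 ?vge1 // exprS vgeMl. Qed.

Lemma vge_nat m : vge 0 m%:R.
Proof. by elim: m => [|m IH]; rewrite ?vge0 // -addn1 natrD vgeD ?vge1. Qed.

Lemma vge_sum k (I : Type) (r : seq I) (P : pred I) (G : I -> F) :
  (forall i, P i -> vge k (G i)) -> vge k (\sum_(i <- r | P i) G i).
Proof. by move=> h; apply: (big_ind (vge k)) => //; [exact: vge0 | exact: vgeD]. Qed.

Lemma vge_quot x y : x != 0 -> (y == 0) || (v x <= v y) -> vge 0 (y / x).
Proof.
move=> x0; have [->|y0] := eqVneq y 0; first by rewrite mul0r => *; apply: vge0.
by rewrite /vge /= vM ?invr_eq0 // vV //; lia.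
Qed.

Lemma expwz_neq0 (z : int) : w ^ z != 0.
Proof. by rewrite expfz_eq0 negb_and w_neq0 orbT. Qed.

Lemma v_expwz (z : int) : v (w ^ z) = z.
Proof.
have v_expw m : v (w ^+ m) = m%:Z.
  elim: m => [|m IH]; first by rewrite expr0 v1.
  by rewrite exprS vM ?expf_neq0 // vw IH; lia.
case: z => m; first by rewrite v_expw.
by rewrite NegzE -invr_expz -exprnP vV ?expf_neq0 // v_expw.
Qed.

Lemma vge_expwzM k (z : int) x : vge k x -> vge (z + k) (w ^ z * x).
Proof. by apply: vgeM; rewrite /vge v_expwz lexx orbT. Qed.

Lemma vge_divw k x : vge (k + 1) x -> vge k (x / w).
Proof.
move=> /(vge_expwzM (-1)); rewrite mulrC -exprz_inv expr1z.
by have -> : -1 + (k + 1) = k by lia.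
Qed.

Lemma vge_mulw k x : vge k x -> vge (k + 1) (w * x).
Proof. by move=> /(vge_expwzM 1); rewrite expr1z addrC. Qed.

Lemma unitR_neq0 x : unitR x -> x != 0.
Proof. by case/andP. Qed.

Lemma unitR_vge x : unitR x -> vge 0 x.
Proof. by case/andP=> _ /eqP h; rewrite /vge h lexx orbT. Qed.

Lemma nonunitR_vge1 x : vge 0 x -> ~~ unitR x -> vge 1 x.
Proof. rewrite /vge /unitR; have [//|x0] := eqVneq x 0; rewrite /=; lia. Qed.

Lemma unitR1 : unitR 1.
Proof. by rewrite /unitR oner_neq0 v1. Qed.

Lemma unitRV x : unitR x -> unitR x^-1.
Proof. by case/andP=> x0 /eqP h; rewrite /unitR invr_eq0 x0 vV // h. Qed.

Lemma unitRM x y : unitR x -> unitR y -> unitR (x * y).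
Proof.
case/andP=> x0 /eqP hx /andP [y0 /eqP hy].
by rewrite /unitR mulf_neq0 // vM // hx hy.
Qed.

Lemma unitRD a d : unitR a -> vge 1 d -> unitR (a + d).
Proof.
case/andP=> a0 /eqP va.
have [->|d0] := eqVneq d 0; first by rewrite addr0 /unitR a0 va.
rewrite /vge (negbTE d0) /= => vd.
have s0 : a + d != 0.
  apply: contraTneq vd => /eqP; rewrite addrC addr_eq0 => /eqP ->.
  by rewrite vN va.
have := vD a0 d0 s0.
have md0 : - d != 0 by rewrite oppr_eq0.
have := vD s0 md0; rewrite addrK vN => /(_ a0).
by rewrite /unitR s0 /=; lia.
Qed.

Lemma unitR_congr a b : unitR a -> vge 1 (b - a) -> unitR b.
Proof. by move=> ha /(unitRD ha); rewrite addrC subrK. Qed.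

Definition mvge m n (k : int) (A : 'M[F]_(m, n)) := forall i j, vge k (A i j).

Lemma mvge0 m n k : mvge k (0 : 'M[F]_(m, n)).
Proof. by move=> i j; rewrite mxE vge0. Qed.

Lemma mvge1 m : mvge 0 (1%:M : 'M[F]_m).
Proof. by move=> i j; rewrite mxE; case: (i == j); rewrite ?vge1 ?vge0. Qed.

Lemma mvge_le m n a b (A : 'M[F]_(m, n)) : a <= b -> mvge b A -> mvge a A.
Proof. by move=> ab h i j; apply: vge_le (h i j). Qed.

Lemma mvgeD m n k (A B : 'M[F]_(m, n)) : mvge k A -> mvge k B -> mvge k (A + B).
Proof. by move=> hA hB i j; rewrite mxE; apply: vgeD. Qed.

Lemma mvgeN m n k (A : 'M[F]_(m, n)) : mvge k A -> mvge k (- A).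
Proof. by move=> hA i j; rewrite mxE vgeN. Qed.

Lemma mvge_mul m n p a b (A : 'M[F]_(m, n)) (B : 'M[F]_(n, p)) :
  mvge a A -> mvge b B -> mvge (a + b) (A *m B).
Proof. by move=> hA hB i j; rewrite mxE; apply: vge_sum => l _; apply: vgeM. Qed.

Lemma mvge_mull m n p b (A : 'M[F]_(m, n)) (B : 'M[F]_(n, p)) :
  mvge 0 A -> mvge b B -> mvge b (A *m B).
Proof. by move=> hA hB; have := mvge_mul hA hB; rewrite add0r. Qed.

Lemma mvge_mulr m n p b (A : 'M[F]_(m, n)) (B : 'M[F]_(n, p)) :
  mvge b A -> mvge 0 B -> mvge b (A *m B).
Proof. by move=> hA hB; have := mvge_mul hA hB; rewrite addr0. Qed.

Definition int_congr (m : int) (x y : F) := [&& vge 0 x, vge 0 y & vge m (x - y)].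

Lemma int_congrD m x1 x2 y1 y2 :
  int_congr m x1 x2 -> int_congr m y1 y2 -> int_congr m (x1 + y1) (x2 + y2).
Proof.
case/and3P=> a1 a2 a3 /and3P [b1 b2 b3]; apply/and3P; split; try exact: vgeD.
by rewrite opprD addrACA; apply: vgeD.
Qed.

Lemma int_congrM m x1 x2 y1 y2 :
  int_congr m x1 x2 -> int_congr m y1 y2 -> int_congr m (x1 * y1) (x2 * y2).
Proof.
case/and3P=> a1 a2 a3 /and3P [b1 b2 b3]; apply/and3P; split; try exact: vgeMl.
have -> : x1 * y1 - x2 * y2 = x1 * (y1 - y2) + (x1 - x2) * y2 by ring.
by apply: vgeD; [apply: vgeMl | apply: vgeMr].
Qed.

Lemma int_congr_refl m x : vge 0 x -> int_congr m x x.
Proof. by move=> h; rewrite /int_congr h subrr vge0. Qed.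

Lemma int_congr_det m n (A B : 'M[F]_n) :
  mvge 0 A -> mvge 0 B -> mvge m (A - B) -> int_congr m (\det A) (\det B).
Proof.
move=> hA hB hAB; apply: (big_ind2 (int_congr m)) => [||s _].
- exact: int_congr_refl (vge0 0).
- exact: int_congrD.
apply: int_congrM; first by apply/int_congr_refl/vgeX/vgeN1.
apply: (big_ind2 (int_congr m)) => [||i _]; [exact: int_congr_refl vge1 | exact: int_congrM |].
by apply/and3P; split; [exact: hA | exact: hB | have := hAB i (perm.fun_of_perm s i); rewrite !mxE].
Qed.

Lemma vge_det n (A : 'M[F]_n) : mvge 0 A -> vge 0 (\det A).
Proof.
move=> h; have h0 : mvge 0 (A - A) by rewrite subrr; exact: mvge0.
by case/and3P: (int_congr_det h h h0).
Qed.

Lemma vge_detB m n (A B : 'M[F]_n) :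
  mvge 0 A -> mvge 0 B -> mvge m (A - B) -> vge m (\det A - \det B).
Proof. by move=> hA hB hAB; case/and3P: (int_congr_det hA hB hAB). Qed.

Lemma vge_cofactor n (A : 'M[F]_n.+1) i j : mvge 0 A -> vge 0 (cofactor A i j).
Proof.
move=> hA; apply: vgeMl; first exact/vgeX/vgeN1.
by apply: vge_det => a b; rewrite !mxE.
Qed.

Definition isK (A : 'M[F]_3) := mvge 0 A /\ unitR (\det A).

Lemma isK1 : isK 1%:M.
Proof. by split; [exact: mvge1 | rewrite det1 unitR1]. Qed.

Lemma isK_mul A B : isK A -> isK B -> isK (A *m B).
Proof.
case=> hA uA [hB uB]; split; first exact: mvge_mull.
by rewrite det_mulmx unitRM.
Qed.

Lemma isK_unitmx A : isK A -> A \in unitmx.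
Proof. by case=> _ /unitR_neq0 h; rewrite unitmxE unitfE. Qed.

Lemma isK_inv A : isK A -> isK (invmx A).
Proof.
move=> hK; have uA := isK_unitmx hK; case: hK => hA dA.
split; last by rewrite det_inv unitRV.
rewrite /invmx uA => i j; rewrite !mxE.
by apply: vgeMl; [exact/unitR_vge/unitRV | exact: vge_cofactor].
Qed.

Lemma isK_mulVmx A : isK A -> invmx A *m A = 1%:M.
Proof. by move=> h; rewrite mulVmx // isK_unitmx. Qed.

Lemma isK_mulmxV A : isK A -> A *m invmx A = 1%:M.
Proof. by move=> h; rewrite mulmxV // isK_unitmx. Qed.

Definition isKn (n : nat) (A : 'M[F]_3) := isK A /\ mvge n%:Z (A - 1%:M).

Lemma isKn_K n A : isKn n A -> isK A.
Proof. by case. Qed.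

Lemma isKn_congr1 n A : (1 <= n)%N -> mvge 0 A -> mvge n%:Z (A - 1%:M) -> isKn n A.
Proof.
move=> n1 hA h; split => //; split => //.
have := vge_detB hA (@mvge1 3) h; rewrite det1 => hc.
by apply: (unitR_congr unitR1); apply: vge_le hc; lia.
Qed.

Lemma isKn1 n : isKn n 1%:M.
Proof. by split; [exact: isK1 | rewrite subrr; exact: mvge0]. Qed.

Lemma isKn_mul n A B : isKn n A -> isKn n B -> isKn n (A *m B).
Proof.
case=> kA hA [kB hB]; split; first exact: isK_mul.
have -> : A *m B - 1%:M = (A - 1%:M) *m B + (B - 1%:M).
  by rewrite mulmxBl mul1mx addrA subrK.
by apply: mvgeD => //; apply: mvge_mulr => //; case: kB.
Qed.

Lemma isKn_inv n A : isKn n A -> isKn n (invmx A).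
Proof.
case=> kA hA; have kI := isK_inv kA; split => //.
have -> : invmx A - 1%:M = - (invmx A *m (A - 1%:M)).
  by rewrite mulmxBr isK_mulVmx // mulmx1 opprB.
by apply/mvgeN/mvge_mull => //; case: kI.
Qed.

(* Entries of a 3x3 matrix indexed by concrete ordinals carry distinct proof
   terms; routing them through [inord] makes equal entries syntactically equal,
   so that [ring] and case analysis on the indices see through them. *)
Ltac natify A :=
  let B := fresh "B" in let E := fresh "E" in
  pose B := fun a b : nat => A (inord a) (inord b);
  (have E : forall a b, A a b = B a b by move=> a b; rewrite /B !inord_val);
  clearbody B; rewrite ?E /=.

Lemma det_mx33 (A : 'M[F]_3) : \det A =
  A 0 0 * (A 1 1 * A 2 2 - A 1 2 * A 2 1)
  - A 0 1 * (A 1 0 * A 2 2 - A 1 2 * A 2 0)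
  + A 0 2 * (A 1 0 * A 2 1 - A 1 1 * A 2 0).
Proof.
rewrite (expand_det_row _ 0) !big_ord_recl big_ord0 /cofactor.
rewrite !(expand_det_row _ 0) !big_ord_recl !big_ord0 /cofactor !det_mx11 !mxE.
natify A; rewrite !expr0 !expr1 /=; ring.
Qed.

Lemma mulmx3E (A B : 'M[F]_3) i j :
  (A *m B) i j = A i 0 * B 0 j + A i 1 * B 1 j + A i 2 * B 2 j.
Proof. by rewrite mxE !big_ord_recr big_ord0 /= add0r; natify A; natify B. Qed.

Lemma cofactor3E (A : 'M[F]_3) :
  [/\ cofactor A 1 0 = - (A 0 1 * A 2 2 - A 0 2 * A 2 1),
      cofactor A 2 0 = A 0 1 * A 1 2 - A 0 2 * A 1 1 &
      cofactor A 2 1 = - (A 0 0 * A 1 2 - A 0 2 * A 1 0)].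
Proof.
rewrite /cofactor !(expand_det_row _ 0) !big_ord_recl !big_ord0 /cofactor !det_mx11 !mxE.
by natify A; rewrite !expr0 !expr1 /=; split; ring.
Qed.

Definition isK' (A : 'M[F]_3) :=
  isK A /\ [&& vge 1 (A 0 1), vge 1 (A 0 2) & vge 1 (A 1 2)].

Lemma isK'_K A : isK' A -> isK A.
Proof. by case. Qed.

Lemma isK'_mul A B : isK' A -> isK' B -> isK' (A *m B).
Proof.
case=> [[hA dA] /and3P [a1 a2 a3]] [[hB dB] /and3P [b1 b2 b3]].
split; first exact: isK_mul.
rewrite !mulmx3E; apply/and3P; split; repeat apply: vgeD;
  first [apply: vgeMr; by [|apply hB] | apply: vgeMl; by [|apply hA]].
Qed.

Lemma isK'_inv A : isK' A -> isK' (invmx A).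
Proof.
move=> hK; have [kA /and3P [a1 a2 a3]] := hK.
split; first exact: isK_inv.
have [hA dA] := kA; have di : vge 0 (\det A)^-1 by apply/unitR_vge/unitRV.
have [c10 c20 c21] := cofactor3E A.
rewrite /invmx isK_unitmx // !mxE c10 c20 c21.
apply/and3P; split; apply: vgeMl => //; rewrite ?vgeN; apply: vgeB;
  first [apply: vgeMr; by [|apply hA] | apply: vgeMl; by [|apply hA]].
Qed.

Lemma in_RE x : in_R v x <-> vge 0 x.
Proof.
rewrite /in_R /vge; split; first by case=> [->|->]; rewrite ?eqxx ?orbT.
by case/orP => [/eqP|]; auto.
Qed.

Lemma congr_powE k x y : congr_pow v k x y <-> vge k (x - y).
Proof.
rewrite /congr_pow /vge; split; first by case=> [->|->]; rewrite ?eqxx ?orbT.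
by case/orP => [/eqP|]; auto.
Qed.

Lemma inKE A : inK v A <-> isK A.
Proof.
split; first by case=> hA [d0 dv]; split; [move=> i j; apply/in_RE | rewrite /unitR d0 dv].
by case=> hA /andP [d0 /eqP dv]; split; [move=> i j; apply/in_RE | split].
Qed.

Lemma inKnE n A : inKn v n A <-> isKn n A.
Proof.
split; first by case=> /inKE hK h; split => // i j; have /congr_powE := h i j; rewrite !mxE.
case=> hK h; split; first exact/inKE.
by move=> i j; apply/congr_powE; have := h i j; rewrite !mxE.
Qed.

Lemma inK'E A : inK' v A <-> isK' A.
Proof.
split.
  case=> /inKE hK h; split => //.
  by apply/and3P; split; [move: (h 0 1 isT) | move: (h 0 2 isT) | move: (h 1 2 isT)];
    move/congr_powE; rewrite subr0.
case=> hK /and3P [a1 a2 a3]; split; first exact/inKE.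
move=> i j h; apply/congr_powE; rewrite subr0.
move: h a1 a2 a3; natify A.
by case: i j => [[|[|[|i]]] Hi] [[|[|[|j]]] Hj] //= _; rewrite ?vge0.
Qed.

Notation W := (wmat w).

Lemma wmat2E : W *m W = \matrix_(i < 3, j < 3)
  nth 0 (nth [::] [:: [:: 0; w; 0]; [:: 0; 0; w]; [:: 1; 0; 0]] i) j.
Proof.
apply/matrixP => i j; rewrite mulmx3E !mxE.
by case: i j => [[|[|[|i]]] Hi] [[|[|[|j]]] Hj] //=; rewrite ?mxE /=; ring.
Qed.

Lemma wmatX3 : W ^+ 3 = w%:M.
Proof.
rewrite !exprS expr0 mulr1 mulrA -!mulmxE wmat2E; apply/matrixP => i j.
rewrite mulmx3E !mxE.
by case: i j => [[|[|[|i]]] Hi] [[|[|[|j]]] Hj] //=; rewrite ?mxE /=; ring.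
Qed.

Lemma wmatXM3 r : W ^+ (3 * r) = (w ^+ r)%:M.
Proof. by rewrite exprM wmatX3 rmorphXn. Qed.

Lemma det_wmat : \det W = w.
Proof. by rewrite det_mx33 !mxE /=; ring. Qed.

(* The conjugate [W A W^-1], written without inverting W. *)
Definition wmat_conj (A : 'M[F]_3) : 'M[F]_3 :=
  \matrix_(i < 3, j < 3) nth 0 (nth [::] [:: [:: A 2 2; w * A 2 0; w * A 2 1];
      [:: A 0 2 / w; A 0 0; A 0 1]; [:: A 1 2 / w; A 1 0; A 1 1]] i) j.

Lemma wmat_conjE A : W *m A = wmat_conj A *m W.
Proof.
apply/matrixP => i j; rewrite !mulmx3E /wmat_conj !mxE /=; natify A.
case: i j => [[|[|[|i]]] Hi] [[|[|[|j]]] Hj] //=; try ring.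
all: by rewrite ?mulr0 ?mul0r ?add0r ?addr0 ?mulr1 ?mul1r mulfVK.
Qed.

(* K' is the stabiliser of the lattice chain R[w'] > w'R[w'] > w'^2R[w'], which W shifts. *)
Lemma isK'_wmat_conj A : isK' A -> isK' (wmat_conj A).
Proof.
case=> [[hA dA] /and3P [a1 a2 a3]].
have vge_w0 : vge 0 w by apply: vge_le vge_w.
have det_conj : \det (wmat_conj A) = \det A.
  have := congr1 determinant (wmat_conjE A); rewrite !det_mulmx det_wmat => h.
  by apply: (mulIf w_neq0); rewrite -h mulrC.
split; first split.
- move=> i j; rewrite /wmat_conj mxE.
  case: i j => [[|[|[|i]]] Hi] [[|[|[|j]]] Hj] //=; rewrite ?vge0 //.
  all: try first [exact: hA | apply: vge_divw; rewrite add0r; done | exact: vgeMl (hA _ _)].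
- by rewrite det_conj.
- rewrite /wmat_conj !mxE /=; apply/and3P; split => //.
  + by have := vge_mulw (hA 2 0); rewrite add0r.
  + by have := vge_mulw (hA 2 1); rewrite add0r.
Qed.

Lemma isK'_wmatX_conj r A : isK' A -> exists2 B, isK' B & W ^+ r *m A = B *m W ^+ r.
Proof.
elim: r A => [|r IH] A hA; first by exists A; rewrite // !expr0 mul1mx mulmx1.
have [B hB eB] := IH _ (isK'_wmat_conj hA).
exists B => //.
by rewrite exprSr -mulmxE -mulmxA wmat_conjE mulmxA eB -mulmxA mulmxE -exprSr.
Qed.

Definition isK'F' (h : 'M[F]_3) :=
  exists k r c, [/\ isK' k, c != 0 & h = c *: (k *m W ^+ r)].

Lemma isK'F'_K' k : isK' k -> isK'F' k.
Proof. by exists k, 0%N, 1; rewrite expr0 mulmx1 scale1r oner_neq0. Qed.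

Lemma isK'F'_mul h1 h2 : isK'F' h1 -> isK'F' h2 -> isK'F' (h1 *m h2).
Proof.
move=> [k1 [r1 [c1 [hk1 c10 ->]]]] [k2 [r2 [c2 [hk2 c20 ->]]]].
have [B hB eB] := isK'_wmatX_conj r1 hk2.
exists (k1 *m B), (r1 + r2)%N, (c1 * c2); split; [exact: isK'_mul | by rewrite mulf_neq0 |].
rewrite -scalemxAl -scalemxAr scalerA; congr (_ *: _).
by rewrite exprD -mulmxE -[in LHS]mulmxA (mulmxA (W ^+ r1) k2) eB !mulmxA.
Qed.

Lemma isK'F'_linv h : isK'F' h -> exists2 h', isK'F' h' & h' *m h = 1%:M.
Proof.
move=> [k [r [c [hk c0 ->]]]].
have [B hB eB] := isK'_wmatX_conj (2 * r) (isK'_inv hk).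
have wr0 : w ^+ r != 0 by rewrite expf_neq0.
exists ((c^-1 * (w ^+ r)^-1) *: (B *m W ^+ (2 * r))).
  by exists B, (2 * r)%N, (c^-1 * (w ^+ r)^-1); rewrite mulf_neq0 ?invr_eq0.
rewrite -scalemxAl -scalemxAr scalerA.
have -> : B *m W ^+ (2 * r) *m (k *m W ^+ r) = (w ^+ r)%:M.
  rewrite mulmxA -eB -(mulmxA _ (invmx k)) isK_mulVmx ?mulmx1; last exact: isK'_K.
  by rewrite mulmxE -exprD -wmatXM3; congr (_ ^+ _); lia.
by rewrite scale_scalar_mx; congr (_%:M); field; rewrite c0 wr0.
Qed.

Definition F'unit (b c : F) : 'M[F]_3 := 1%:M + b *: W + c *: (W *m W).

Lemma F'unitE b c : F'unit b c = \matrix_(i < 3, j < 3)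
  nth 0 (nth [::] [:: [:: 1; c * w; b * w]; [:: b; 1; c * w]; [:: c; b; 1]] i) j.
Proof.
apply/matrixP => i j; rewrite /F'unit wmat2E !mxE.
by case: i j => [[|[|[|i]]] Hi] [[|[|[|j]]] Hj] //=; ring.
Qed.

Lemma isK'_F'unit b c : vge 0 b -> vge 0 c -> isK' (F'unit b c).
Proof.
move=> hb hc.
have vge1Mw x : vge 0 x -> vge 1 (x * w) by move=> hx; rewrite mulrC; apply: vgeMr vge_w hx.
have hR : mvge 0 (F'unit b c).
  move=> i j; rewrite F'unitE mxE.
  by case: i j => [[|[|[|i]]] Hi] [[|[|[|j]]] Hj] //=;
    rewrite ?vge1 ?vge0 //; apply: vgeMl => //; apply: vge_le vge_w.
split; first split => //.
- apply: (unitR_congr unitR1); rewrite F'unitE det_mx33 !mxE /=.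
  have -> : 1 * (1 * 1 - c * w * b) - c * w * (b * 1 - c * w * c) +
    b * w * (b * b - 1 * c) - 1 = (b ^+ 3 - 3%:R * b * c + w * c ^+ 3) * w by ring.
  apply: vge1Mw; have w0 : vge 0 w by apply: vge_le vge_w.
  by rewrite vgeD ?vgeMl ?vgeX // vgeB ?vgeX // vgeMr // vgeMl // vge_nat.
- by rewrite F'unitE !mxE /=; apply/and3P; split; apply: vge1Mw.
Qed.

Lemma inF'x_isK'F' f : inF'x w f -> isK'F' f.
Proof.
move=> [a [b [c [h0 ->]]]].
have : [|| [&& a != 0, (b == 0) || (v a <= v b) & (c == 0) || (v a <= v c)],
   [&& b != 0, (a == 0) || (v b + 1 <= v a) & (c == 0) || (v b <= v c)] |
   [&& c != 0, (a == 0) || (v c + 1 <= v a) & (b == 0) || (v c + 1 <= v b)]].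
  move: h0; rewrite !xpair_eqE.
  have [->|a0] := eqVneq a 0; have [->|b0] := eqVneq b 0; have [->|c0] := eqVneq c 0;
    rewrite ?eqxx //= => _; lia.
have vwM x : x != 0 -> v (w * x) = v x + 1 by move=> x0; rewrite vM // vw addrC.
case/or3P => /and3P [x0 h1 h2].
- exists (F'unit (b / a) (c / a)), 0%N, a; split => //.
    by apply: isK'_F'unit; apply: vge_quot.
  apply/matrixP => i j; rewrite [RHS]mxE expr0 mulmx1 F'unitE wmat2E !mxE.
  by case: i j => [[|[|[|i]]] Hi] [[|[|[|j]]] Hj] //=;
    rewrite ?mulr1n ?mulr0n; field; rewrite ?x0 ?w_neq0.
- have wb0 : w * b != 0 by rewrite mulf_neq0.
  exists (F'unit (c / b) (a / (w * b))), 1%N, b; split => //.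
    by apply: isK'_F'unit; apply: vge_quot; rewrite ?vwM.
  apply/matrixP => i j; rewrite [RHS]mxE expr1 mulmx3E F'unitE wmat2E !mxE.
  by case: i j => [[|[|[|i]]] Hi] [[|[|[|j]]] Hj] //=;
    rewrite ?mulr1n ?mulr0n; field; rewrite ?x0 ?w_neq0.
- have wc0 : w * c != 0 by rewrite mulf_neq0.
  exists (F'unit (a / (w * c)) (b / (w * c))), 2%N, c; split => //.
    by apply: isK'_F'unit; apply: vge_quot; rewrite ?vwM.
  apply/matrixP => i j; rewrite [RHS]mxE expr2 -mulmxE wmat2E mulmx3E F'unitE !mxE.
  by case: i j => [[|[|[|i]]] Hi] [[|[|[|j]]] Hj] //=;
    rewrite ?mulr1n ?mulr0n; field; rewrite ?x0 ?w_neq0.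
Qed.

Lemma inK'F'xE h : inK'F'x v w h <-> isK'F' h.
Proof.
split=> [[k [f [/inK'E hk [/inF'x_isK'F' hf ->]]]] | [k [r [c [hk c0 ->]]]]].
  by apply: isK'F'_mul => //; exact: isK'F'_K'.
exists k, (c *: W ^+ r); split; first exact/inK'E.
split; last by rewrite scalemxAr.
rewrite (divn_eq r 3) exprD mulnC wmatXM3 -mulmxE mul_scalar_mx scalerA.
set a := c * w ^+ (r %/ 3).
have a0 : a != 0 by rewrite mulf_neq0 // expf_neq0.
have : (r %% 3 < 3)%N by rewrite ltn_mod.
case: (r %% 3)%N => [|[|[|s]]] // _.
- exists a, 0, 0; split; first by rewrite !xpair_eqE (negbTE a0).
  by rewrite !scale0r !addr0 expr0 scalemx1.
- exists 0, a, 0; split; first by rewrite !xpair_eqE (negbTE a0) andbF.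
  by rewrite scale0r addr0 expr1 raddf0 add0r.
- exists 0, 0, a; split; first by rewrite !xpair_eqE (negbTE a0) !andbF.
  by rewrite scale0r raddf0 !add0r expr2 mulmxE.
Qed.

Fixpoint digits (s : seq F) (m : nat) : seq F :=
  if m is m'.+1 then [seq a + w * d | a <- s, d <- digits s m'] else [:: 0].

Lemma size_digits s m : size (digits s m) = (size s ^ m)%N.
Proof. by elim: m => [|m IH] //=; rewrite size_allpairs IH expnS. Qed.

(* With s a set of representatives of R / wR, [reps s m f] represents
   R / w^m R, or wR / w^m R when f holds. *)
Definition reps (s : seq F) (m : nat) (f : bool) : seq F :=
  if f then [seq w * d | d <- digits s m.-1] else digits s m.

Lemma size_reps s m f : size (reps s m f) = (size s ^ (m - f))%N.
Proof. by case: f; rewrite /reps ?size_map size_digits ?subn0 ?subn1. Qed.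

Definition residue_reps (s : seq F) :=
  (forall y, y \in s -> vge 0 y) /\
  (forall x, vge 0 x -> exists2 y, y \in s & vge 1 (x - y)).

Lemma digits_cover s m x : residue_reps s -> vge 0 x ->
  exists2 d, d \in digits s m & vge m (x - d) && vge 0 d.
Proof.
move=> [sR s_cover]; elim: m x => [|m IH] x hx.
  by exists 0; rewrite ?inE // subr0 hx vge0.
have [y ys hy] := s_cover x hx.
have [d dD /andP [hd1 hd2]] := IH _ (vge_divw (hy : vge (0 + 1) _)).
exists (y + w * d); first exact: allpairs_f.
apply/andP; split; last by apply: vgeD; [exact: sR | apply: vgeMl => //; apply: vge_le vge_w].
have -> : x - (y + w * d) = w * ((x - y) / w - d).
  by rewrite mulrBr mulrCA divff // mulr1 opprD addrA.
by rewrite -addn1 PoszD; apply: vge_mulw.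
Qed.

Lemma reps_cover s m (f : bool) x : residue_reps s -> (0 < m)%N -> vge 0 x ->
  (f -> vge 1 x) -> exists2 d, d \in reps s m f & vge m (x - d) && vge 0 d.
Proof.
move=> hs m0 hx; case: f => hf; last exact: digits_cover.
have [d dD /andP [hd1 hd2]] := digits_cover m.-1 hs (vge_divw (hf isT : vge (0 + 1) _)).
exists (w * d); first exact: map_f.
apply/andP; split; last by apply: vgeMl => //; apply: vge_le vge_w.
have -> : x - w * d = w * (x / w - d) by rewrite mulrBr mulrCA divff // mulr1.
by rewrite (_ : m%:Z = m.-1%:Z + 1); [apply: vge_mulw | lia].
Qed.

Lemma row_has_unit k r : isK k -> exists c, unitR (k r c).
Proof.
case=> hk dk; case: (pickP (fun c => unitR (k r c))) => [c hc|h]; first by exists c.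
have : vge 1 (\det k).
  rewrite (expand_det_row _ r); apply: vge_sum => c _.
  by apply: vgeMr; [apply: nonunitR_vge1; rewrite ?h | exact: vge_cofactor].
by case/andP: dk => d0 /eqP dv; rewrite /vge (negbTE d0) dv.
Qed.

Lemma first_unit (x : 'I_3 -> F) (S : pred 'I_3) :
  (forall c, vge 0 (x c)) -> (exists c, S c && unitR (x c)) ->
  exists c0, [/\ S c0, unitR (x c0) & forall c, S c -> (c < c0)%N -> vge 1 (x c)].
Proof.
move=> hx [c1 hc1].
case: (@arg_minnP _ c1 (fun c => S c && unitR (x c)) (@nat_of_ord 3) hc1) => c0 /andP [S0 U0] hmin.
exists c0; split => // c Sc lt; apply: nonunitR_vge1 => //; apply/negP => Uc.
by have := hmin c; rewrite Sc Uc => /(_ isT); rewrite leqNgt lt.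
Qed.

Definition normal_form (p0 p1 p2 c0 c1 c2 : 'I_3) (d01 d02 d12 : F) : 'M[F]_3 :=
  \matrix_(r, c)
    if r == p0 then (if c == c0 then 1 else if c == c1 then d01 else d02)
    else if r == p1 then (if c == c0 then 0 else if c == c1 then 1 else d12)
    else (if c == c2 then 1 else 0).

Lemma normal_form_eq p0 p1 p2 c0 c1 c2 d01 d02 d12 (k : 'M[F]_3) :
  distinct3 p0 p1 p2 -> distinct3 c0 c1 c2 ->
  [/\ k p0 c0 = 1, k p0 c1 = d01 & k p0 c2 = d02] ->
  [/\ k p1 c0 = 0, k p1 c1 = 1 & k p1 c2 = d12] -> (forall c, k p2 c = (c == c2)%:R) ->
  normal_form p0 p1 p2 c0 c1 c2 d01 d02 d12 = k.
Proof.
move=> hp hc [k00 k01 k02] [k10 k11 k12] k2.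
have /and3P [p01 p02 p12] := hp; have /and3P [c01 c02 c12] := hc.
have [p10 p20 p21] : [/\ p1 != p0, p2 != p0 & p2 != p1] by split; rewrite eq_sym.
have [c10 c20 c21] : [/\ c1 != c0, c2 != c0 & c2 != c1] by split; rewrite eq_sym.
apply/matrixP => r c; rewrite mxE.
have /or3P [/eqP ->|/eqP ->|/eqP ->] := distinct3_cover hp r;
have /or3P [/eqP ->|/eqP ->|/eqP ->] := distinct3_cover hc c.
all: by rewrite ?k2 ?eqxx ?(negbTE p01, negbTE p02, negbTE p12, negbTE p10, negbTE p20, negbTE p21)
  ?(negbTE c01, negbTE c02, negbTE c12, negbTE c10, negbTE c20, negbTE c21).
Qed.

Definition ord3 : seq 'I_3 := [:: @Ordinal 3 0 isT; @Ordinal 3 1 isT; @Ordinal 3 2 isT].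

Lemma mem_ord3 c : c \in ord3.
Proof. by case: c => [[|[|[|c]]] Hc] //; rewrite !inE. Qed.

Section NormalForms.
Variables (s : seq F) (p0 p1 p2 : 'I_3) (a01 a02 a12 : nat).

Definition normal_forms_at (c0 c1 c2 : 'I_3) : seq 'M[F]_3 :=
  if distinct3 c0 c1 c2 then
    [seq normal_form p0 p1 p2 c0 c1 c2 x yz.1 yz.2 | x <- reps s a01 (c1 < c0)%N,
       yz <- [seq (y, z) | y <- reps s a02 (c2 < c0)%N, z <- reps s a12 (c2 < c1)%N]]
  else [::].

Definition normal_forms : seq 'M[F]_3 :=
  flatten [seq normal_forms_at c.1 c.2.1 c.2.2 |
             c <- [seq (c0, c12) | c0 <- ord3, c12 <- [seq (c1, c2) | c1 <- ord3, c2 <- ord3]]].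

Lemma mem_normal_forms (c0 c1 c2 : 'I_3) d01 d02 d12 : distinct3 c0 c1 c2 ->
  d01 \in reps s a01 (c1 < c0)%N -> d02 \in reps s a02 (c2 < c0)%N ->
  d12 \in reps s a12 (c2 < c1)%N ->
  normal_form p0 p1 p2 c0 c1 c2 d01 d02 d12 \in normal_forms.
Proof.
move=> hc h01 h02 h12; apply/flatten_mapP; exists (c0, (c1, c2)).
  by apply: allpairs_f; [exact: mem_ord3 | apply: allpairs_f; exact: mem_ord3].
rewrite /normal_forms_at hc /=.
by apply/allpairsP; exists (d01, (d02, d12)); split => //; apply/allpairsP; exists (d02, d12).
Qed.

(* A column order with m inversions contributes q^(3 - m) times the common factor. *)
Lemma size_normal_forms : (0 < a01)%N -> (0 < a02)%N -> (0 < a12)%N ->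
  size normal_forms = (size s ^ (a01.-1 + a02.-1 + a12.-1) *
     (size s ^ 3 + 2 * size s ^ 2 + 2 * size s + 1))%N.
Proof.
have size_at c0 c1 c2 : size (normal_forms_at c0 c1 c2) = if distinct3 c0 c1 c2 then
    (size s ^ (a01 - (c1 < c0)%N) * (size s ^ (a02 - (c2 < c0)%N) *
      size s ^ (a12 - (c2 < c1)%N)))%N else 0%N.
  by rewrite /normal_forms_at; case: ifP => //= _; rewrite !size_allpairs !size_reps.
rewrite /normal_forms size_flatten /shape -map_comp /= !size_at /=.
case: a01 a02 a12 => [|x] // [|y] // [|z] // _ _ _.
by rewrite /= !subn0 !subn1 /= !expnS !expnD; set Q := size s; ring.
Qed.

End NormalForms.

Section Lambda.
Variables (l1 l2 l3 : int) (n : nat).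
Hypothesis n_gt0 : (0 < n)%N.

Notation lam := (lam_mat w l1 l2 l3).

Notation lam_exp := (lam_exp l1 l2 l3).
Notation gap := (gap l1 l2 l3).
Notation gap_order := (gap_order l1 l2 l3).
Notation capn := (capn n).

(* The group H = K meet lam^-1 K' lam. *)
Definition isH (g : 'M[F]_3) := isK g /\ forall i j, vge (gap i j) (g i j).

Lemma isH1 : isH 1%:M.
Proof.
split => [|i j]; first exact: isK1.
by rewrite mxE; have [->|] := eqVneq i j; rewrite ?gapii ?vge1 ?vge0.
Qed.

Lemma isH_mul g h : isH g -> isH h -> isH (g *m h).
Proof.
case=> kg hg [kh hh]; split => [|i j]; first exact: isK_mul.
rewrite mxE; apply: vge_sum => k _.
by apply: vge_le (gap_triangle l1 l2 l3 i j k) _; apply: vgeM.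
Qed.

Lemma lam_mulmxE (A : 'M[F]_3) i j : (lam *m A) i j = w ^ (lam_exp i) * A i j.
Proof.
rewrite mulmx3E /lam_mat !mxE; natify A.
by case: i j => [[|[|[|i]]] Hi] [[|[|[|j]]] Hj] //=; rewrite ?mul0r ?addr0 ?add0r.
Qed.

Lemma mulmx_lamE (A : 'M[F]_3) i j : (A *m lam) i j = A i j * w ^ (lam_exp j).
Proof.
rewrite mulmx3E /lam_mat !mxE; natify A.
by case: i j => [[|[|[|i]]] Hi] [[|[|[|j]]] Hj] //=; rewrite ?mulr0 ?addr0 ?add0r.
Qed.

Lemma det_lam_neq0 : \det lam != 0.
Proof.
rewrite det_mx33 /lam_mat !mxE /= ?(mulr0, mul0r, subr0, addr0).
by rewrite !mulf_neq0 ?expwz_neq0.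
Qed.

Lemma isH_lam g : isH g -> exists2 k, isK' k & lam *m g = k *m lam.
Proof.
case=> [[hg dg] hgap].
pose k := \matrix_(i < 3, j < 3) (w ^ (lam_exp i - lam_exp j) * g i j).
have ek : lam *m g = k *m lam.
  apply/matrixP => i j; rewrite lam_mulmxE mulmx_lamE mxE mulrAC -expfzDr //.
  by rewrite subrK.
exists k => //.
have hk (i j : 'I_3) : vge (i < j)%N (k i j).
  rewrite mxE; have := vge_expwzM (lam_exp i - lam_exp j) (hgap i j).
  by apply: vge_le; rewrite /gap; lia.
split; first split.
- by move=> i j; apply: vge_le (hk i j); case: (i < j)%N.
- have := congr1 determinant ek; rewrite !det_mulmx => h.
  suff -> : \det k = \det g by [].
  by apply: (mulIf det_lam_neq0); rewrite -h mulrC.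
- by apply/and3P; split; apply: (hk _ _).
Qed.

Definition reduces (k k' : 'M[F]_3) :=
  exists g y, [/\ isH g, isKn n y & k' = g *m k *m y].

Lemma reduces_trans k1 k2 k3 : reduces k1 k2 -> reduces k2 k3 -> reduces k1 k3.
Proof.
move=> [g [y [hg hy ->]]] [g' [y' [hg' hy' ->]]].
exists (g' *m g), (y *m y'); split; [exact: isH_mul | exact: isKn_mul | by rewrite !mulmxA].
Qed.

Lemma reduces_K k k' : isK k -> reduces k k' -> isK k'.
Proof.
move=> hk [g [y [[hg _] hy ->]]].
by apply: isK_mul; [exact: isK_mul | exact: isKn_K hy].
Qed.

Lemma reduces_mull g k : isH g -> reduces k (g *m k).
Proof. by move=> hg; exists g, 1%:M; rewrite mulmx1; split => //; exact: isKn1. Qed.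

Lemma reduces_addmx k D : isK k -> mvge n%:Z D -> reduces k (k + D).
Proof.
move=> hk hD; have [hk0 _] := isK_inv hk.
exists 1%:M, (1%:M + invmx k *m D); split; first exact: isH1.
  apply: isKn_congr1 => //; last by rewrite [1%:M + _]addrC addrK; apply: mvge_mull.
  by apply: mvgeD; [exact: mvge1 | apply: mvge_mull => //; apply: mvge_le hD].
by rewrite mul1mx mulmxDr mulmx1 mulmxA isK_mulmxV // mul1mx.
Qed.

Definition elem (i j : 'I_3) (x : F) : 'M[F]_3 := 1%:M + x *: delta_mx i j.

Lemma elemE i j x r c : elem i j x r c = (r == c)%:R + x * ((r == i) && (c == j))%:R.
Proof. by rewrite !mxE. Qed.

Lemma elem_mulE (i j : 'I_3) x (k : 'M[F]_3) r c :
  (elem i j x *m k) r c = if r == i then k r c + x * k j c else k r c.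
Proof.
rewrite mulmxDl mul1mx -scalemxAl [in LHS]mxE mxE [(delta_mx i j *m k) r c]mxE.
rewrite (bigD1 j) //= big1 ?addr0 => [|l /negbTE lj]; last by rewrite mxE lj andbF mul0r.
by rewrite mxE eqxx andbT; case: (r == i); rewrite ?mul1r ?mul0r ?mulr0 ?addr0.
Qed.

Lemma det_elem i j x : \det (elem i j x) = if i == j then 1 + x else 1.
Proof. by rewrite det_mx33 !mxE; case: i j => [[|[|[|i]]] Hi] [[|[|[|j]]] Hj] //=; ring. Qed.

Lemma isH_elem i j x : i != j -> vge 0 x -> vge (gap i j) x -> isH (elem i j x).
Proof.
have vge_b (b : bool) : vge 0 (b%:R : F) by case: b; rewrite ?vge1 ?vge0.
move=> ij h0 hgap; split; first split.
- by move=> r c; rewrite elemE; apply: vgeD => //; exact: vgeMr h0 (vge_b _).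
- by rewrite det_elem (negbTE ij) unitR1.
move=> r c; rewrite elemE; have [<-|rc] := eqVneq r c.
  by rewrite gapii /=; apply: vgeD; [exact: vge1 | exact: vgeMr h0 (vge_b _)].
rewrite /= add0r; have [/andP [/eqP -> /eqP ->]|] := boolP ((r == i) && (c == j)).
  by rewrite mulr1.
by rewrite mulr0 => _; apply: vge0.
Qed.

Lemma reduces_addrow k i j x : i != j -> 1 <= gap j i -> vge 0 x ->
  reduces k (elem i j x *m k).
Proof.
move=> ij hgap hx; apply/reduces_mull/isH_elem => //.
by apply: vge_le hx; have := gap_sym l1 l2 l3 ij; lia.
Qed.

Lemma reduces_scale k i u : unitR u -> reduces k (elem i i (u - 1) *m k).
Proof.
move=> hu; apply: reduces_mull.
have elem_scaleE r c : elem i i (u - 1) r c = if r == c then (if r == i then u else 1) else 0.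
  rewrite elemE; have [<-|rc] := eqVneq r c.
    by have [_|] := eqVneq r i; rewrite /= ?mulr1 ?mulr0 ?addr0 // addrC subrK.
  suff -> : (r == i) && (c == i) = false by rewrite /= mulr0 addr0.
  by apply/negbTE; apply: contra rc => /andP [/eqP -> /eqP ->].
split; first split.
- move=> r c; rewrite elem_scaleE.
  by case: (r == c); case: (r == i); rewrite ?vge0 ?vge1 ?unitR_vge.
- by rewrite det_elem eqxx addrC subrK.
move=> r c; rewrite elem_scaleE; have [<-|rc] := eqVneq r c; last by rewrite vge0.
by rewrite gapii; case: (r == i); rewrite ?vge1 ?unitR_vge.
Qed.

Lemma reduces_clear k p r c : r != p -> 1 <= gap p r -> isK k -> k p c = 1 ->
  exists2 k', reduces k k' &
    forall r' c', k' r' c' = if r' == r then k r c' - k r c * k p c' else k r' c'.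
Proof.
move=> rp hgap hk hpc; exists (elem r p (- k r c) *m k).
  by apply: reduces_addrow => //; rewrite vgeN; apply: hk.1.
by move=> r' c'; rewrite elem_mulE mulNr; case: eqP => // ->.
Qed.

Lemma reduces_pivot k p (S : pred 'I_3) : isK k -> (exists c, S c && unitR (k p c)) ->
  exists c k', [/\ S c, reduces k k', k' p c = 1,
    forall c', S c' -> (c' < c)%N -> vge 1 (k' p c') &
    forall r c', k' r c' = if r == p then (k p c)^-1 * k p c' else k r c'].
Proof.
move=> hk hS; have [c [Sc uc minc]] := first_unit (fun c => hk.1 p c) hS.
have kE r c' : (elem p p ((k p c)^-1 - 1) *m k) r c' =
    if r == p then (k p c)^-1 * k p c' else k r c'.
  by rewrite elem_mulE; case: eqP => [->|//]; rewrite mulrBl mul1r addrC subrK.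
exists c, (elem p p ((k p c)^-1 - 1) *m k); split => //.
- exact/reduces_scale/unitRV.
- by rewrite kE eqxx mulVf ?unitR_neq0.
- by move=> c' Sc' lt; rewrite kE eqxx; apply: vgeMl (minc c' Sc' lt); apply/unitR_vge/unitRV.
Qed.

Definition echelon (p0 p1 p2 c0 c1 c2 : 'I_3) (k : 'M[F]_3) :=
  [/\ k p0 c0 = 1, forall c : 'I_3, (c < c0)%N -> vge 1 (k p0 c),
      [/\ k p1 c0 = 0, k p1 c1 = 1 & (c2 < c1)%N -> vge 1 (k p1 c2)] &
      forall c, k p2 c = (c == c2)%:R].

Lemma reduces_top_row k p0 p1 p2 : isK k -> gap_order p0 p1 p2 ->
  exists c0 k', [/\ reduces k k', k' p0 c0 = 1,
    forall c : 'I_3, (c < c0)%N -> vge 1 (k' p0 c), k' p1 c0 = 0 & k' p2 c0 = 0].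
Proof.
move=> hk hp; have /and3P [h01 h02 h12] := gap_order_distinct hp.
case/and3P: hp => g01 g02 _.
have [h10 h20] : p1 != p0 /\ p2 != p0 by split; rewrite eq_sym.
have [j0 u0] := row_has_unit p0 hk.
have [c0 [k1 [_ r1 k1p0c0 k1min _]]] := reduces_pivot (S := predT) hk (ex_intro _ j0 u0).
have K1 := reduces_K hk r1.
have [k2 r2 k2E] := reduces_clear h10 g01 K1 k1p0c0.
have k2p0 c : k2 p0 c = k1 p0 c by rewrite k2E (negbTE h01).
have k2p0c0 : k2 p0 c0 = 1 by rewrite k2p0.
have [k3 r3 k3E] := reduces_clear h20 g02 (reduces_K K1 r2) k2p0c0.
exists c0, k3; split.
- exact: reduces_trans r1 (reduces_trans r2 r3).
- by rewrite k3E (negbTE h02).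
- by move=> c lt; rewrite k3E (negbTE h02) k2p0; apply: k1min.
- by rewrite k3E (negbTE h12) k2E eqxx k1p0c0 mulr1 subrr.
- by rewrite k3E eqxx k2p0c0 mulr1 subrr.
Qed.

Lemma reduces_echelon k p0 p1 p2 : isK k -> gap_order p0 p1 p2 ->
  exists c0 c1 c2 k', [/\ distinct3 c0 c1 c2, reduces k k' & echelon p0 p1 p2 c0 c1 c2 k'].
Proof.
move=> hk hp; have /and3P [h01 h02 h12] := gap_order_distinct hp.
have g12 : 1 <= gap p1 p2 by case/and3P: hp.
have h21 : p2 != p1 by rewrite eq_sym.
have [c0 [k1 [r1 k1p0c0 k1min k1p1c0 k1p2c0]]] := reduces_top_row hk hp.
have K1 := reduces_K hk r1.
have [j1 u1] := row_has_unit p1 K1.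
have j1c0 : j1 != c0 by apply: contraTneq u1 => ->; rewrite k1p1c0 /unitR eqxx.
have [c1 [k2 [c1c0 r2 k2p1c1 k2min k2E]]] :=
  reduces_pivot (S := [pred c | c != c0]) K1 (ex_intro _ j1 (introT andP (conj j1c0 u1))).
have K2 := reduces_K K1 r2.
have k2p1c0 : k2 p1 c0 = 0 by rewrite k2E eqxx k1p1c0 mulr0.
have [k3 r3 k3E] := reduces_clear h21 g12 K2 k2p1c1.
have [c2 hc] : exists c2, distinct3 c0 c1 c2 by apply: distinct3_complete; rewrite eq_sym.
have k3p2c0 : k3 p2 c0 = 0.
  by rewrite k3E eqxx k2p1c0 mulr0 subr0 k2E (negbTE h21) k1p2c0.
have k3p2c1 : k3 p2 c1 = 0 by rewrite k3E eqxx k2p1c1 mulr1 subrr.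
have u2 : exists c, pred1 c2 c && unitR (k3 p2 c).
  have [j2 u2] := row_has_unit p2 (reduces_K K2 r3); exists j2; rewrite u2 andbT /=.
  have /or3P [/eqP e|/eqP e|//] := distinct3_cover hc j2; move: u2; rewrite e.
    by rewrite k3p2c0 /unitR eqxx.
  by rewrite k3p2c1 /unitR eqxx.
have [c2' [k4 [/eqP -> r4 k4p2c2 _ k4E]]] := reduces_pivot (reduces_K K2 r3) u2.
exists c0, c1, c2, k4; split => //.
  exact: reduces_trans r1 (reduces_trans r2 (reduces_trans r3 r4)).
have k4p1 c : k4 p1 c = k2 p1 c by rewrite k4E (negbTE h12) k3E (negbTE h12).
have k4p0 c : k4 p0 c = k1 p0 c by rewrite k4E (negbTE h02) k3E (negbTE h02) k2E (negbTE h01).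
split.
- by rewrite k4p0.
- by move=> c lt; rewrite k4p0; apply: k1min.
- rewrite !k4p1 k2p1c0 k2p1c1; split => // lt; apply: k2min lt.
  by rewrite /= eq_sym; case/and3P: hc.
- move=> c; have /or3P [/eqP ->|/eqP ->|/eqP ->] := distinct3_cover hc c.
  + by case/and3P: hc => _ /negbTE -> _; rewrite k4E eqxx k3p2c0 mulr0.
  + by case/and3P: hc => _ _ /negbTE ->; rewrite k4E eqxx k3p2c1 mulr0.
  + by rewrite k4p2c2 eqxx.
Qed.

Lemma reduces_add_entry k i j cj x : isK k -> i != j ->
  (forall c, k j c = (c == cj)%:R) -> 1 <= gap i j -> vge (capn (gap i j)) x ->
  reduces k (k + x *: delta_mx i cj).
Proof.
move=> hk ij hrow hgap; rewrite capnE // => hx.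
have [le|lt] := lerP (gap i j) n%:Z.
  have -> : k + x *: delta_mx i cj = elem i j x *m k.
    apply/matrixP => r c; rewrite elem_mulE !mxE hrow.
    by case: (r == i); case: (c == cj); rewrite /= ?mulr1 ?mulr0 ?addr0.
  by apply/reduces_mull/isH_elem => //; apply: vge_le hx; lia.
apply: reduces_addmx => // r c; rewrite !mxE.
by apply: vgeMr; [apply: vge_le hx; lia | case: (_ && _); rewrite ?vge0 ?vge1].
Qed.

Lemma reduces_add_pivot_entry k i j c0 c1 c2 x : isK k -> i != j -> c1 != c0 -> c1 != c2 ->
  k j c0 = 0 -> k j c1 = 1 -> vge 0 (k j c2) -> 1 <= gap i j -> vge (capn (gap i j)) x ->
  exists k', [/\ reduces k k', forall r c, r != i -> k' r c = k r c,
    k' i c0 = k i c0, k' i c1 = k i c1 + x & vge 1 (k' i c2 - k i c2)].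
Proof.
move=> hk ij c10 c12 kj0 kj1 kj2 hgap; rewrite capnE // => hx.
have hx1 : vge 1 x by apply: vge_le hx; lia.
have [le|lt] := lerP (gap i j) n%:Z.
  exists (elem i j x *m k); split.
  - by apply/reduces_mull/isH_elem => //; apply: vge_le hx; lia.
  - by move=> r c /negbTE ri; rewrite elem_mulE ri.
  - by rewrite elem_mulE eqxx kj0 mulr0 addr0.
  - by rewrite elem_mulE eqxx kj1 mulr1.
  - by rewrite elem_mulE eqxx addrC addKr; apply: vgeMr.
exists (k + x *: delta_mx i c1); split.
- apply: reduces_addmx => // r c; rewrite !mxE.
  by apply: vgeMr; [apply: vge_le hx; lia | case: (_ && _); rewrite ?vge0 ?vge1].
- by move=> r c /negbTE ri; rewrite !mxE ri mulr0 addr0.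
- by rewrite !mxE eqxx eq_sym (negbTE c10) mulr0 addr0.
- by rewrite !mxE !eqxx mulr1.
- by rewrite !mxE eqxx eq_sym (negbTE c12) mulr0 addr0 subrr vge0.
Qed.

Lemma reduces_top_entries s k p0 p1 p2 c0 c1 c2 : residue_reps s -> isK k ->
  gap_order p0 p1 p2 -> distinct3 c0 c1 c2 ->
  k p0 c0 = 1 -> (forall c : 'I_3, (c < c0)%N -> vge 1 (k p0 c)) ->
  k p1 c0 = 0 -> k p1 c1 = 1 -> vge 0 (k p1 c2) -> (forall c, k p2 c = (c == c2)%:R) ->
  exists d01 d02 k', [/\ d01 \in reps s (capn (gap p0 p1)) (c1 < c0)%N,
    d02 \in reps s (capn (gap p0 p2)) (c2 < c0)%N, reduces k k',
    forall r c, r != p0 -> k' r c = k r c &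
    [/\ k' p0 c0 = 1, k' p0 c1 = d01 & k' p0 c2 = d02]].
Proof.
move=> hs hk hp hc kp0c0 kp0 kp1c0 kp1c1 kp1c2 kp2.
have /and3P [h01 h02 _] := gap_order_distinct hp; case/and3P: hp => g01 g02 _.
have /and3P [c01 c02 c12] := hc.
have [d01 d01D /andP [hd01 _]] := reps_cover hs (capn_gt0 n_gt0 g01) (hk.1 p0 c1) (kp0 c1).
have [k1 [r1 k1r k1c0 k1c1 k1c2]] : exists k1, [/\ reduces k k1,
    forall r c, r != p0 -> k1 r c = k r c, k1 p0 c0 = k p0 c0,
    k1 p0 c1 = k p0 c1 + (d01 - k p0 c1) & vge 1 (k1 p0 c2 - k p0 c2)].
  apply: (reduces_add_pivot_entry hk h01 _ c12 kp1c0 kp1c1) => //.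
  - by rewrite eq_sym.
  - by rewrite -opprB vgeN.
have K1 := reduces_K hk r1.
have k1p0c2 : (c2 < c0)%N -> vge 1 (k1 p0 c2).
  by move=> lt; rewrite -(subrK (k p0 c2) (k1 p0 c2)) vgeD // kp0.
have [d02 d02D /andP [hd02 _]] := reps_cover hs (capn_gt0 n_gt0 g02) (K1.1 p0 c2) k1p0c2.
exists d01, d02, (k1 + (d02 - k1 p0 c2) *: delta_mx p0 c2); split => //.
- apply: reduces_trans r1 _; apply: (reduces_add_entry K1 h02) => //.
    by move=> c; rewrite k1r ?kp2 // eq_sym.
  by rewrite -opprB vgeN.
- by move=> r c rp0; rewrite !mxE (negbTE rp0) mulr0 addr0 k1r.
- rewrite !mxE !eqxx /= (negbTE c02) (negbTE c12) !mulr0 !addr0 mulr1 k1c0 k1c1 kp0c0.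
  by split; rewrite // addrC subrK.
Qed.

Lemma reduces_normal_form s k p0 p1 p2 c0 c1 c2 : residue_reps s -> isK k ->
  gap_order p0 p1 p2 -> distinct3 c0 c1 c2 -> echelon p0 p1 p2 c0 c1 c2 k ->
  exists d01 d02 d12, [/\ d01 \in reps s (capn (gap p0 p1)) (c1 < c0)%N,
    d02 \in reps s (capn (gap p0 p2)) (c2 < c0)%N,
    d12 \in reps s (capn (gap p1 p2)) (c2 < c1)%N &
    reduces k (normal_form p0 p1 p2 c0 c1 c2 d01 d02 d12)].
Proof.
move=> hs hk hp hc [kp0c0 kp0 [kp1c0 kp1c1 kp1c2] kp2].
have hd := gap_order_distinct hp; have /and3P [h01 h02 h12] := hd.
have g12 : 1 <= gap p1 p2 by case/and3P: hp.
have /and3P [_ c02 c12] := hc.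
have [d12 d12D /andP [hd12 d12R]] := reps_cover hs (capn_gt0 n_gt0 g12) (hk.1 p1 c2) kp1c2.
pose k1 := k + (d12 - k p1 c2) *: delta_mx p1 c2.
have r1 : reduces k k1 by apply: (reduces_add_entry hk h12 kp2 g12); rewrite -opprB vgeN.
have k1E r c : k1 r c = if (r == p1) && (c == c2) then d12 else k r c.
  rewrite !mxE; case: ifP => [/andP [/eqP -> /eqP ->]|_]; last by rewrite mulr0 addr0.
  by rewrite mulr1 addrC subrK.
have k1p0 c : k1 p0 c = k p0 c by rewrite k1E (negbTE h01).
have k1p1 c : c != c2 -> k1 p1 c = k p1 c by move=> /negbTE cc2; rewrite k1E cc2 andbF.
have [d01 [d02 [k2 [d01D d02D r2 k2r k2p0]]]] :
    exists d01 d02 k2, [/\ d01 \in reps s (capn (gap p0 p1)) (c1 < c0)%N,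
    d02 \in reps s (capn (gap p0 p2)) (c2 < c0)%N, reduces k1 k2,
    forall r c, r != p0 -> k2 r c = k1 r c &
    [/\ k2 p0 c0 = 1, k2 p0 c1 = d01 & k2 p0 c2 = d02]].
  apply: (reduces_top_entries hs (reduces_K hk r1) hp hc).
  - by rewrite k1p0.
  - by move=> c lt; rewrite k1p0; apply: kp0.
  - by rewrite k1p1.
  - by rewrite k1p1.
  - by rewrite k1E !eqxx.
  - by move=> c; rewrite k1E (eq_sym p2) (negbTE h12) kp2.
exists d01, d02, d12; split => //.
have [h10 h20 h21] : [/\ p1 != p0, p2 != p0 & p2 != p1] by split; rewrite eq_sym.
rewrite (normal_form_eq hd hc k2p0); first exact: reduces_trans r1 r2.
  by rewrite !k2r // k1p1 // k1p1 // k1E !eqxx.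
by move=> c; rewrite k2r // k1E (negbTE h21) kp2.
Qed.

Lemma reduces_normal_forms s k p0 p1 p2 : residue_reps s -> isK k -> gap_order p0 p1 p2 ->
  exists2 t, t \in normal_forms s p0 p1 p2
      (capn (gap p0 p1)) (capn (gap p0 p2)) (capn (gap p1 p2)) & reduces k t.
Proof.
move=> hs hk hp.
have [c0 [c1 [c2 [k' [hc r e]]]]] := reduces_echelon hk hp.
have [d01 [d02 [d12 [h01 h02 h12 r']]]] := reduces_normal_form hs (reduces_K hk r) hp hc e.
by exists (normal_form p0 p1 p2 c0 c1 c2 d01 d02 d12);
  [exact: mem_normal_forms | exact: reduces_trans r r'].
Qed.

Definition represents (g t : 'M[F]_3) :=
  exists h k, [/\ isK'F' h, g = h *m lam *m k & reduces k t].

Lemma represents_same_dcoset g g' t :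
  represents g t -> represents g' t -> same_dcoset v w n g g'.
Proof.
move=> [h [k [hh -> [G [y [hG hy ->]]]]]] [h' [k' [hh' -> [G' [y' [hG' hy' e]]]]]].
have [kk hkk ekk] := isH_lam hG; have [kk' hkk' ekk'] := isH_lam hG'.
have [hi hhi ehi] := isK'F'_linv hh.
exists (h' *m invmx kk' *m kk *m hi), (y *m invmx y'); split; [|split].
- apply/inK'F'xE; apply: isK'F'_mul => //; apply: isK'F'_mul; last exact: isK'F'_K'.
  by apply: isK'F'_mul => //; exact/isK'F'_K'/isK'_inv.
- by apply/inKnE; apply: isKn_mul => //; apply: isKn_inv.
have lam_k' : lam *m k' = invmx kk' *m (kk *m lam *m k *m y) *m invmx y'.
  have E := congr1 (mulmx lam) e; rewrite !mulmxA ekk ekk' in E.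
  rewrite E !mulmxA isK_mulVmx ?mul1mx; last exact: isK'_K.
  by rewrite -(mulmxA _ y') isK_mulmxV ?mulmx1 //; exact: isKn_K hy'.
by rewrite -(mulmxA h') lam_k' !mulmxA -(mulmxA _ hi h) ehi mulmx1.
Qed.

Lemma dcoset_count_le_normal_forms s p0 p1 p2 : residue_reps s -> gap_order p0 p1 p2 ->
  dcoset_count_le v w n l1 l2 l3 (size (normal_forms s p0 p1 p2
    (capn (gap p0 p1)) (capn (gap p0 p2)) (capn (gap p1 p2))))%:R.
Proof.
move=> hs hp S hcell hdist; rewrite ler_nat.
apply: (count_classes_le _ represents_same_dcoset hdist) => a ha.
have [h [k [/inK'F'xE hh [/inKE hk ->]]]] := hcell _ (mem_nth 0 ha).
have [t tT kt] := reduces_normal_forms hs hk hp.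
by exists t => //; exists h, k.
Qed.

End Lambda.
End Valuation.

Lemma cubic_count_le (q t : nat) (E : int) : (0 < q)%N -> t%:Z + 3 <= E ->
  ((q ^ t * (q ^ 3 + 2 * q ^ 2 + 2 * q + 1))%N)%:R <= (q%:Q) ^ E * (1 + 1 / q%:Q) ^+ 3.
Proof.
move=> q0 hE.
have [d ->] : exists d : nat, E = (t + 3 + d)%N%:Z by exists `|(E - t%:Z - 3)%R|%N; lia.
rewrite -exprnP !exprD !(natrM, natrD, natrX); set x := q%:Q.
have x_ge1 : 1 <= x by rewrite /x ler1n.
have x_ge0 : 0 <= x by apply: le_trans x_ge1.
have -> : x ^+ t * x ^+ 3 * x ^+ d * (1 + 1 / x) ^+ 3 = x ^+ t * ((x + 1) ^+ 3 * x ^+ d).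
  by field; rewrite /x pnatr_eq0 -lt0n.
apply: ler_wpM2l; first exact: exprn_ge0.
have : 0 <= (x + 1) ^+ 3 * (x ^+ d - 1).
  by rewrite mulr_ge0 ?subr_ge0 ?exprn_ege1 ?exprn_ge0 ?addr_ge0.
set y := x ^+ d; nra.
Qed.

Theorem lemma9p10 (F : fieldType) (v : F -> int) (w : F) (p q : nat)
  (n j : nat) (l1 l2 l3 : int) :
  padic_field v w p q -> p != 2%N -> p != 3%N ->
  (1 <= n)%N -> (2 <= j)%N -> (j %% 3 != 1)%N ->
  l1 + l2 + l3 = 0 ->
  ((j %% 3 = 2)%N ->
     Num.max (l1 - l2) (Num.max (l2 - l3) (l3 - l1 + 1))
       <= n%:Z - (j %/ 3)%:Z - 1) ->
  ((j %% 3 = 0)%N ->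
     Num.max (l2 - l1) (Num.max (l3 - l2) (l1 - l3 - 1))
       <= n%:Z - (j %/ 3)%:Z - 1) ->
  dcoset_count_le v w n l1 l2 l3
    (if (j %% 3 == 0)%N
     then (q%:Q) ^ (3 * n%:Z - 2 * (j %/ 3)%:Z) * (1 + 1 / q%:Q) ^+ 3
     else (q%:Q) ^ (3 * n%:Z - 2 * (j %/ 3)%:Z - 2) * (1 + 1 / q%:Q) ^+ 3).
Proof.
move=> [[[vM vD] [w0 vw]] _ [s [sz sR _ s_cover]] _ _] _ _ n_gt0 _ hj hsum h2 h0.
have hs : residue_reps v s.
  by split=> [y /sR /in_RE // | x /in_RE /s_cover [y [ys /congr_powE]]]; exists y.
have q_gt0 : (0 < q)%N by have [y + _] := hs.2 0 (vge0 v 0); rewrite -sz; case: (s).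
have [p0 [p1 [p2 hp]]] := exists_gap_order l1 l2 l3.
have [g01 g02 g12] := and3P hp.
move=> S hcell hdist.
apply: le_trans (dcoset_count_le_normal_forms vM vD w0 vw n_gt0 hs hp hcell hdist) _.
rewrite -(fun_if (fun e => q%:Q ^ e * (1 + 1 / q%:Q) ^+ 3)).
rewrite size_normal_forms ?capn_gt0 // sz; apply: cubic_count_le => //.
move: (capn_gap_sum_le hp hsum hj h2 h0).
move: (capn_gt0 n_gt0 g01) (capn_gt0 n_gt0 g02) (capn_gt0 n_gt0 g12).
by case: ifP => _; lia.
Qed.
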